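(* Let $a_n=n$ for all $n\ge1$. Then for every integer $n\ge1$ that is not of the form $p^k$ with $p$ prime and $k\ge1$, one has $A_n^+=A_n^-$; in particular $A_n^+\equiv A_n^-\pmod n$.
   Context: $\mu$ is the Möbius function. For an integer sequence $(a_n)$ and $n\ge1$, $A_n^+=\prod_{d\mid n,\ \mu(d)=1} a_{n/d}$ and $A_n^-=\prod_{d\mid n,\ \mu(d)=-1} a_{n/d}$ (empty products equal $1$). *)

From mathcomp Require Import all_boot all_order all_algebra.
Set Implicit Arguments. Unset Strict Implicit. Unset Printing Implicit Defensive.
Import GRing.Theory Num.Theory.

(* Moebius function on positive integers (value at 0 is irrelevant; set 0).
   mu d = 0 if d is divisible by the square of a prime,
   otherwise (-1)^(number of distinct prime factors of d). *)
Definition squarefree (d : nat) : bool := all (fun p => ~~ (p * p %| d)) (primes d).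

Definition moebius (d : nat) : int :=
  if d == 0 then 0%R
  else if squarefree d then ((-1) ^+ size (primes d))%R else 0%R.

Definition Aplus (a : nat -> int) (n : nat) : int :=
  (\prod_(d <- divisors n | moebius d == 1%R) a (n %/ d)%N)%R.
Definition Aminus (a : nat -> int) (n : nat) : int :=
  (\prod_(d <- divisors n | moebius d == (-1)%R) a (n %/ d)%N)%R.

Definition prime_power (n : nat) : Prop := exists p k, prime p /\ (0 < k)%N /\ n = (p ^ k)%N.

(** For n > 1 with two distinct prime factors p and q, the squarefree divisors
    of n fall into quadruples d, p d, q d, p q d with d coprime to p q.  In each
    quadruple mu(d) = mu(p q d) = - mu(p d) = - mu(q d), so d and p q d contribute
    to one of A_n^+, A_n^- and p d, q d to the other; the two contributions agree
    because (n/d) (n/(p q d)) = (n/(p d)) (n/(q d)). *)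

From mathcomp Require Import all_boot all_order all_algebra.
From mathcomp Require Import ring.
Import GRing.Theory.

Set Implicit Arguments.
Unset Strict Implicit.
Unset Printing Implicit Defensive.

Lemma squarefreeM_prime p m : prime p -> ~~ (p %| m) -> 0 < m ->
  squarefree (p * m) = squarefree m.
Proof.
move=> p_pr p_ndvd_m m_gt0; have p_gt0 := prime_gt0 p_pr.
rewrite /squarefree; apply/allP/allP => sqf_m r.
- move=> r_m; have := sqf_m r; rewrite primesM // r_m orbT => /(_ isT).
  by apply: contra => /(dvdn_mull p).
- rewrite primesM // primes_prime // inE => /orP[/eqP -> | r_m].
    by rewrite dvdn_pmul2l.
  have /and3P[r_pr _ r_dvd_m] : [&& prime r, 0 < m & r %| m] by rewrite -mem_primes.
  rewrite Gauss_dvdr ?sqf_m // coprimeMl andbb prime_coprime // dvdn_prime2 //.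
  by apply: contraNneq p_ndvd_m => <-.
Qed.

Lemma size_primesM_prime p m : prime p -> ~~ (p %| m) -> 0 < m ->
  size (primes (p * m)) = (size (primes m)).+1.
Proof.
move=> p_pr p_ndvd_m m_gt0; have p_gt0 := prime_gt0 p_pr.
have: perm_eq (primes (p * m)) (p :: primes m); last exact: perm_size.
apply: uniq_perm; rewrite ?primes_uniq //=.
  by rewrite primes_uniq mem_primes (negbTE p_ndvd_m) !andbF.
by move=> r; rewrite primesM // primes_prime // !inE.
Qed.

Lemma moebiusM_prime p m : prime p -> ~~ (p %| m) -> 0 < m ->
  moebius (p * m) = (- moebius m)%R.
Proof.
move=> p_pr p_ndvd_m m_gt0.
rewrite /moebius muln_eq0 !eqn0Ngt prime_gt0 // m_gt0 /=.
rewrite squarefreeM_prime // size_primesM_prime //.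
by case: ifP => _; rewrite ?exprS ?mulN1r ?oppr0.
Qed.

Lemma squarefree_ndvd_divn p m : prime p -> squarefree m -> 0 < m -> p %| m ->
  ~~ (p %| m %/ p).
Proof.
move=> p_pr sqf_m m_gt0 p_dvd_m; apply/negP => p_dvd_mp.
have /(allP sqf_m) /negP : p \in primes m by rewrite mem_primes p_pr m_gt0.
by apply; rewrite -[X in _ %| X](divnK p_dvd_m) mulnC dvdn_pmul2l ?prime_gt0.
Qed.

Definition sqfree_divisors_coprime n m :=
  [seq d <- divisors n | squarefree d && coprime d m].

Lemma mem_sqfree_divisors_coprime n m d : 0 < n ->
  (d \in sqfree_divisors_coprime n m) = [&& d %| n, squarefree d & coprime d m].
Proof. by move=> n_gt0; rewrite mem_filter -dvdn_divisors // andbC. Qed.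

Lemma uniq_sqfree_divisors_coprime n m : uniq (sqfree_divisors_coprime n m).
Proof. exact/filter_uniq/divisors_uniq. Qed.

Lemma perm_sqfree_divisors_coprime n m p :
    0 < n -> prime p -> p %| n -> coprime p m ->
  perm_eq (sqfree_divisors_coprime n m)
    (sqfree_divisors_coprime n (p * m) ++
     map (muln p) (sqfree_divisors_coprime n (p * m))).
Proof.
move=> n_gt0 p_pr p_dvd_n p_co_m; have p_gt0 := prime_gt0 p_pr.
set S := sqfree_divisors_coprime n (p * m).
rewrite -(perm_filterC (fun d => ~~ (p %| d))).
have -> : [seq d <- sqfree_divisors_coprime n m | ~~ (p %| d)] = S.
  rewrite -filter_predI; apply: eq_filter => d /=.
  by rewrite coprimeMr [coprime d p]coprime_sym (prime_coprime _ p_pr) andbCA.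
rewrite perm_cat2l; apply: uniq_perm.
- exact/filter_uniq/uniq_sqfree_divisors_coprime.
- rewrite map_inj_uniq ?uniq_sqfree_divisors_coprime //.
  by move=> x y /eqP; rewrite eqn_pmul2l // => /eqP.
- move=> d; rewrite mem_filter /= negbK; apply/idP/mapP.
  + rewrite mem_sqfree_divisors_coprime //.
    case/andP=> p_dvd_d /and3P[d_dvd_n sqf_d d_co_m].
    have d_gt0 : 0 < d by apply: dvdn_gt0 d_dvd_n.
    have d_eq : d = p * (d %/ p) by rewrite mulnC divnK.
    have p_ndvd_dp : ~~ (p %| d %/ p) by apply: squarefree_ndvd_divn.
    have dp_gt0 : 0 < d %/ p by rewrite divn_gt0 // dvdn_leq.
    exists (d %/ p) => //; rewrite mem_sqfree_divisors_coprime //.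
    rewrite -(@squarefreeM_prime p) // -d_eq sqf_d coprimeMr coprime_sym.
    rewrite (prime_coprime _ p_pr) p_ndvd_dp (coprime_dvdl (dvdn_div p_dvd_d) d_co_m).
    by rewrite !andbT (dvdn_trans (dvdn_div p_dvd_d) d_dvd_n).
  + case=> e; rewrite mem_sqfree_divisors_coprime // => /and3P[e_dvd_n sqf_e].
    rewrite coprimeMr coprime_sym prime_coprime // => /andP[p_ndvd_e e_co_m] ->.
    have e_gt0 : 0 < e by apply: dvdn_gt0 e_dvd_n.
    rewrite dvdn_mulr // mem_sqfree_divisors_coprime // squarefreeM_prime //.
    rewrite coprimeMl p_co_m e_co_m sqf_e Gauss_dvd ?(prime_coprime _ p_pr) //.
    by rewrite p_dvd_n e_dvd_n.
Qed.

Section BigSqfreeDivisors.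

Variables (R : Type) (idx : R) (op : Monoid.com_law idx).

Lemma big_sqfree_divisors_coprime n m p (F : nat -> R) :
    0 < n -> prime p -> p %| n -> coprime p m ->
  \big[op/idx]_(d <- sqfree_divisors_coprime n m) F d =
  \big[op/idx]_(d <- sqfree_divisors_coprime n (p * m)) op (F d) (F (p * d)).
Proof.
move=> n_gt0 p_pr p_dvd_n p_co_m.
rewrite (perm_big _ (perm_sqfree_divisors_coprime n_gt0 p_pr p_dvd_n p_co_m)).
by rewrite big_cat big_map big_split.
Qed.

Lemma big_moebius_eq_sqfree n (s : int) (F : nat -> R) : s != 0%R ->
  \big[op/idx]_(d <- divisors n | moebius d == s) F d =
  \big[op/idx]_(d <- sqfree_divisors_coprime n 1)
     (if moebius d == s then F d else idx).
Proof.
move=> s_neq0; rewrite big_filter big_mkcond [RHS]big_mkcond.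
apply: eq_bigr => d _; rewrite coprimen1 andbT.
have [// | nsqf_d] := boolP (squarefree d).
by rewrite /moebius (negbTE nsqf_d) if_same eq_sym (negbTE s_neq0).
Qed.

Lemma big_sqfree_divisors_coprime2 n p q (F : nat -> R) :
    0 < n -> prime p -> prime q -> p != q -> p %| n -> q %| n ->
  \big[op/idx]_(d <- sqfree_divisors_coprime n 1) F d =
  \big[op/idx]_(d <- sqfree_divisors_coprime n (q * p))
     op (op (F d) (F (p * d))) (op (F (q * d)) (F (p * (q * d)))).
Proof.
move=> n_gt0 p_pr q_pr p_neq_q p_dvd_n q_dvd_n.
rewrite (big_sqfree_divisors_coprime _ n_gt0 p_pr) ?coprimen1 // muln1.
rewrite (big_sqfree_divisors_coprime (fun d => op (F d) (F (p * d))) n_gt0 q_pr) //.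
by rewrite prime_coprime // dvdn_prime2 // eq_sym.
Qed.

Lemma big_moebius1_eq_moebiusN1 n p q (F : nat -> R) :
    0 < n -> prime p -> prime q -> p != q -> p %| n -> q %| n ->
    (forall d, p * (q * d) %| n ->
       op (F d) (F (p * (q * d))) = op (F (p * d)) (F (q * d))) ->
  \big[op/idx]_(d <- divisors n | moebius d == 1%R) F d =
  \big[op/idx]_(d <- divisors n | moebius d == (-1)%R) F d.
Proof.
move=> n_gt0 p_pr q_pr p_neq_q p_dvd_n q_dvd_n F_cross.
rewrite !big_moebius_eq_sqfree // !(big_sqfree_divisors_coprime2 _ n_gt0 p_pr q_pr) //.
apply: eq_big_seq => d; rewrite mem_sqfree_divisors_coprime //.
rewrite coprimeMr ![coprime d _]coprime_sym (prime_coprime _ p_pr) (prime_coprime _ q_pr).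
case/and4P=> d_dvd_n _ q_ndvd_d p_ndvd_d.
have d_gt0 : 0 < d by apply: dvdn_gt0 d_dvd_n.
have p_ndvd_qd : ~~ (p %| q * d).
  by rewrite Euclid_dvdM // dvdn_prime2 // (negbTE p_neq_q).
have qd_gt0 : 0 < q * d by rewrite muln_gt0 prime_gt0.
rewrite (moebiusM_prime p_pr p_ndvd_qd qd_gt0) (moebiusM_prime q_pr q_ndvd_d d_gt0).
rewrite (moebiusM_prime p_pr p_ndvd_d d_gt0) opprK.
have pqd_dvd_n : p * (q * d) %| n.
  by rewrite !Gauss_dvd ?(prime_coprime _ p_pr) ?(prime_coprime _ q_pr) ?p_dvd_n ?q_dvd_n.
rewrite !eqr_oppLR opprK.
have [-> | _] := eqVneq (moebius d) 1%R.
  have one_neqN1 : (1 == -1 :> int)%R = false by [].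
  by rewrite one_neqN1 !Monoid.mulm1 !Monoid.mul1m F_cross.
have [_ | _] := eqVneq (moebius d) (-1)%R.
  by rewrite !Monoid.mulm1 !Monoid.mul1m F_cross.
by rewrite !Monoid.mulm1.
Qed.

End BigSqfreeDivisors.

Lemma divn_mul_cross n p q d : 0 < n -> p * (q * d) %| n ->
  n %/ d * (n %/ (p * (q * d))) = n %/ (p * d) * (n %/ (q * d)).
Proof.
move=> n_gt0 /dvdnP[k n_eq].
have /and4P[_ p_gt0 q_gt0 d_gt0] : [&& 0 < k, 0 < p, 0 < q & 0 < d].
  by rewrite -!muln_gt0 -n_eq.
have n_div e m : 0 < e -> k * (p * (q * d)) = m * e -> n %/ e = m.
  by rewrite n_eq => e_gt0 ->; rewrite mulnK.
rewrite (n_div d (k * p * q)) ?(n_div (p * (q * d)) k) ?(n_div (p * d) (k * q))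
  ?(n_div (q * d) (k * p)) ?muln_gt0 ?p_gt0 ?q_gt0 //; ring.
Qed.

Lemma prime_power_pdiv n : 1 < n -> all (pred1 (pdiv n)) (primes n) -> prime_power n.
Proof.
move=> n_gt1 primes_n; have n_gt0 := ltnW n_gt1; have p_pr := pdiv_prime n_gt1.
exists (pdiv n), (logn (pdiv n) n); split=> //; split.
  by rewrite logn_gt0 mem_primes p_pr n_gt0 pdiv_dvd.
rewrite -p_part part_pnat_id // /pnat n_gt0 /=.
by apply/allP => r /(allP primes_n).
Qed.

Theorem lemma2 (a : nat -> int) :
  (forall n, (0 < n)%N -> a n = Posz n) ->
  forall n : nat, (0 < n)%N -> ~ prime_power n ->
    Aplus a n = Aminus a n /\ (Aplus a n = Aminus a n %[mod Posz n])%Z.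
Proof.
move=> a_id n n_gt0 n_nprime_power.
suff A_eq : Aplus a n = Aminus a n by rewrite A_eq.
have [n_gt1 | n_le1] := ltnP 1 n; last first.
  have -> : n = 1 by apply/anti_leq/andP.
  by rewrite /Aplus /Aminus /= !big_cons !big_nil /= a_id.
have [q q_in_n q_neq_p] : exists2 q, q \in primes n & q != pdiv n.
  by apply/allPn/negP => /(prime_power_pdiv n_gt1).
move: q_in_n; rewrite mem_primes => /and3P[q_pr _ q_dvd_n].
have a_quot e : e %| n -> a (n %/ e) = n %/ e.
  by move=> e_dvd_n; rewrite a_id // divn_gt0 ?(dvdn_gt0 n_gt0) ?(dvdn_leq n_gt0).
have a_cross d : q * (pdiv n * d) %| n ->
    (a (n %/ d)%N * a (n %/ (q * (pdiv n * d)))%N =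
     a (n %/ (q * d))%N * a (n %/ (pdiv n * d))%N)%R.
  move=> qpd_dvd_n.
  have d_dvd_n : d %| n by apply: dvdn_trans qpd_dvd_n; rewrite !dvdn_mull.
  have pd_dvd_n : pdiv n * d %| n by apply: dvdn_trans qpd_dvd_n; apply: dvdn_mull.
  have qd_dvd_n : q * d %| n by apply: dvdn_trans qpd_dvd_n; rewrite mulnCA dvdn_mull.
  by rewrite !a_quot // -!PoszM divn_mul_cross.
exact: big_moebius1_eq_moebiusN1 n_gt0 q_pr (pdiv_prime n_gt1) q_neq_p q_dvd_n
  (pdiv_dvd n) a_cross.
Qed.
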